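(* For every positive integer $n$, let $\rho(n)$ denote the maximum number of runs in a binary word of length $n$. Then the limit $\lim_{n\to\infty}\rho(n)/n$ exists (as a finite real number).
   Context: Words are finite sequences $w=w[1]w[2]\cdots w[n]$ over the binary alphabet $\{0,1\}$, $|w|=n$, and $w[i..j]=w[i]w[i+1]\cdots w[j]$. An integer $p\ge 1$ is a period of $w$ if $w[i+p]=w[i]$ for all $1\le i\le |w|-p$; the period of $w$ is its least period. A run of $w$ is an integer interval $[i..j]$ with $1\le i<j\le |w|$ such that, with $p$ the least period of $w[i..j]$, we have $j-i+1\ge 2p$, and either $i=1$ or $w[i-1]\neq w[i-1+p]$, and either $j=|w|$ or $w[j+1]\ne w[j+1-p]$. *)

From mathcomp Require Import all_boot.
Set Implicit Arguments. Unset Strict Implicit. Unset Printing Implicit Defensive.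

(* Binary words are seq bool; the paper's 1-based letter w[k] is
   [letter w k] = nth false w (k-1). *)
Definition letter (w : seq bool) (k : nat) : bool := nth false w k.-1.

(* w[i..j] (1-based, inclusive) *)
Definition factor (w : seq bool) (i j : nat) : seq bool :=
  take (j - i + 1) (drop i.-1 w).

Definition is_period (u : seq bool) (p : nat) : bool :=
  (1 <= p) && [forall k : 'I_(size u), (k + p < size u) ==>
                  (letter u (k + 1 + p) == letter u (k + 1))].

Definition is_least_period (u : seq bool) (p : nat) : bool :=
  is_period u p && [forall q : 'I_p, ~~ is_period u q].

Definition is_run (w : seq bool) (i j : nat) : bool :=
  [&& 1 <= i, i < j, j <= size w &
   [exists p : 'I_(size w).+1,
      [&& is_least_period (factor w i j) p,
          2 * p <= j - i + 1,
          (i == 1) || (letter w i.-1 != letter w (i.-1 + p)) &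
          (j == size w) || (letter w j.+1 != letter w (j.+1 - p))]]].

Definition nruns (w : seq bool) : nat :=
  \sum_(i < (size w).+1) \sum_(j < (size w).+1) is_run w i j.

Definition rho (n : nat) : nat := \max_(w : n.-tuple bool) nruns w.

(* Call a run of w nonfinal if it does not end at the last letter of w, and let
   rho_nonfinal n be the largest number of nonfinal runs of a binary word of length n.
   The nonfinal runs of u are runs of u ++ v, and so are those of v once extended to
   the left; they stay distinct and nonfinal, so rho_nonfinal is superadditive.
   Runs are linearly many, since a run is determined by the letter following it and
   the start of its Lyndon root (its least rotation for the order in which that
   letter is the smaller one); hence Fekete's lemma gives rho_nonfinal n / n --> L.
   Conversely, a word x of length c with 2 ^ c > n can be chosen to differ from every
   periodic continuation of a given word w of length n, so that all runs of w become
   nonfinal runs of w ++ x. Thus rho_nonfinal n <= rho n <= rho_nonfinal (n + c)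
   <= L (n + c) with c = O(log n), and rho n / n is squeezed to L. *)

From Stdlib Require Import Reals.
From mathcomp Require Import all_boot zify.
From Stdlib Require Import Classical ClassicalEpsilon Lra.
From Coquelicot Require Import Rcomplements Rbar Lim_seq.

Set Implicit Arguments. Unset Strict Implicit. Unset Printing Implicit Defensive.
Open Scope nat_scope.

Definition periodic_on (w : seq bool) (a b p : nat) : Prop :=
  forall z, a <= z -> z + p <= b -> nth false w z = nth false w (z + p).

(* The run [a+1..b+1] of [is_run], in 0-based coordinates. *)
Record run_at (w : seq bool) (a b p : nat) : Prop := RunAt {
  run_period_gt0 : 0 < p;
  run_long : a + 2 * p <= b.+1;
  run_in_word : b < size w;
  run_periodic : periodic_on w a b p;
  run_least : forall q, 0 < q < p -> ~ periodic_on w a b q;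
  run_left_max : a = 0 \/ nth false w a.-1 != nth false w (a.-1 + p);
  run_right_max : b.+1 = size w \/ nth false w b.+1 != nth false w (b.+1 - p) }.

Lemma size_factor w i j : 0 < i <= j -> j <= size w -> size (factor w i j) = j - i + 1.
Proof. by move=> ? ?; rewrite size_take size_drop; case: ifP; lia. Qed.

Lemma nth_factor w i j x : x < j - i + 1 ->
  nth false (factor w i j) x = nth false w (i.-1 + x).
Proof. by move=> ?; rewrite nth_take // nth_drop. Qed.

Lemma is_period_factorP w i j q : 0 < i <= j -> j <= size w ->
  is_period (factor w i j) q <-> 0 < q /\ periodic_on w i.-1 j.-1 q.
Proof.
move=> ij_range j_le; rewrite /is_period /letter size_factor //; split.
- case/andP=> -> /forallP per_q; split=> // z z_ge z_le.
  have k_lt : z - i.-1 < j - i + 1 by lia.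
  have /= /implyP := per_q (Ordinal k_lt); rewrite !nth_factor; try lia.
  have -> : i.-1 + (z - i.-1 + 1 + q).-1 = z + q by lia.
  have -> : i.-1 + (z - i.-1 + 1).-1 = z by lia.
  by move=> /(_ ltac:(lia)) /eqP.
- case=> -> per_q; apply/forallP=> k; apply/implyP=> k_lt.
  have k_lt' := ltn_ord k; rewrite !nth_factor; try lia.
  have -> : i.-1 + (k + 1 + q).-1 = i.-1 + k + q by lia.
  have -> : i.-1 + (k + 1).-1 = i.-1 + k by lia.
  by rewrite (per_q (i.-1 + k)) //; lia.
Qed.

Lemma is_runP w i j : is_run w i j <-> 0 < i /\ exists p, run_at w i.-1 j.-1 p.
Proof.
rewrite /is_run /letter; split.
- case/and4P=> i_gt0 ij_lt j_le /existsP [p /and4P [/andP [per_p /forallP least_p] long left_max right_max]].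
  have ij_range : 0 < i <= j by lia.
  have [p_gt0 per_p'] := (is_period_factorP _ ij_range j_le).1 per_p.
  split=> //; exists p; constructor=> //; try lia.
  + move=> q /andP [q_gt0 q_lt] per_q; apply: (negP (least_p (Ordinal q_lt))).
    exact/(is_period_factorP _ ij_range j_le).
  + move: left_max; case: eqP => [-> | i_ne1] /=; [by left | right].
    by have <- : (i.-1 + p).-1 = i.-1.-1 + p by lia.
  + move: right_max; case: eqP => [-> | j_ne] /=; [left; lia | right].
    have <- : (j.+1 - p).-1 = j.-1.+1 - p by lia.
    by have <- : j.+1.-1 = j.-1.+1 by lia.
- case=> i_gt0 [p [p_gt0 long in_w per_p least_p left_max right_max]].
  have ij_range : 0 < i <= j by lia.
  have j_le : j <= size w by lia.
  have p_lt : p < (size w).+1 by lia.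
  apply/and4P; split; try lia; apply/existsP; exists (Ordinal p_lt); apply/and4P; split=> /=.
  + apply/andP; split; first exact/(is_period_factorP _ ij_range j_le).
    apply/forallP=> q; apply/negP; rewrite (is_period_factorP _ ij_range j_le) => -[q_gt0 per_q].
    by apply: (least_p q) => //; rewrite q_gt0 ltn_ord.
  + lia.
  + case: eqP => //= i_ne1; case: left_max => [? | ]; first lia.
    by have -> : (i.-1 + p).-1 = i.-1.-1 + p by lia.
  + case: eqP => //= j_ne; case: right_max => [? | ]; first lia.
    have -> : (j.+1 - p).-1 = j.-1.+1 - p by lia.
    by have <- : j.-1.+1 = j by lia.
Qed.

Lemma periodic_on_sub w a b p a' b' :
  periodic_on w a b p -> a <= a' -> b' <= b -> periodic_on w a' b' p.
Proof. by move=> per_p ? ? z ? ?; apply: per_p; lia. Qed.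

Lemma nth_catl (u v : seq bool) z : z < size u -> nth false (u ++ v) z = nth false u z.
Proof. by move=> z_lt; rewrite nth_cat z_lt. Qed.

Lemma nth_catr (u v : seq bool) z : nth false (u ++ v) (size u + z) = nth false v z.
Proof. by rewrite nth_cat ltnNge leq_addr addKn. Qed.

Lemma periodic_on_catl u v a b p :
  b < size u -> periodic_on (u ++ v) a b p <-> periodic_on u a b p.
Proof. by move=> b_lt; split=> per_p z ? ?; move: (per_p z); rewrite !nth_catl //; lia. Qed.

Lemma periodic_on_catr u v a b p :
  periodic_on (u ++ v) (size u + a) (size u + b) p <-> periodic_on v a b p.
Proof.
split=> per_p z ? ?.
- by have := per_p (size u + z); rewrite -addnA !nth_catr; apply; lia.
- have -> : z = size u + (z - size u) by lia.
  by rewrite -addnA !nth_catr; apply: per_p; lia.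
Qed.

Lemma run_at_catl u v a b p :
  run_at u a b p -> b.+1 < size u -> run_at (u ++ v) a b p.
Proof.
case=> p_gt0 long in_u per_p least_p left_max right_max b_lt; constructor=> //.
- by rewrite size_cat; lia.
- exact/periodic_on_catl.
- by move=> q q_lt /periodic_on_catl per_q; apply: (least_p q q_lt); apply: per_q.
- by case: left_max => [-> | ]; [left | right; rewrite !nth_catl //; lia].
- by right; case: right_max => [ | ]; [lia | rewrite !nth_catl //; lia].
Qed.

Lemma run_at_catr u v a b p :
  run_at v a b p -> 0 < a -> run_at (u ++ v) (size u + a) (size u + b) p.
Proof.
case=> p_gt0 long in_v per_p least_p left_max right_max a_gt0; constructor=> //.
- lia.
- by rewrite size_cat; lia.
- exact/periodic_on_catr.
- by move=> q q_lt /periodic_on_catr; apply: least_p.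
- right; case: left_max => [ | ]; first lia.
  have -> : (size u + a).-1 = size u + a.-1 by lia.
  by rewrite -addnA !nth_catr.
- case: right_max => [ | ]; [left; rewrite size_cat; lia | right].
  have -> : (size u + b).+1 - p = size u + (b.+1 - p) by lia.
  by rewrite -addnS !nth_catr.
Qed.

Lemma periodic_on_extend_right w a b p : periodic_on w a b p -> a + p <= b.+1 -> b < size w ->
  exists2 b', b <= b' < size w & periodic_on w a b' p /\
    (b'.+1 = size w \/ nth false w b'.+1 != nth false w (b'.+1 - p)).
Proof.
move Hk : (size w - b) => k; elim: k b Hk => [| k IH] b Hk per_p long b_lt; first lia.
case: (eqVneq b.+1 (size w)) => [b_last | b_nlast].
  by exists b; [lia | split; [| left]].
case: (eqVneq (nth false w b.+1) (nth false w (b.+1 - p))) => [same | differ]; last first.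
  by exists b; [lia | split; [| right]].
have [||||b' b'_range per_right] := IH b.+1; try lia; last by exists b' => //; lia.
move=> z ? ?; case: (eqVneq (z + p) b.+1) => [zp_eq | ?]; last by apply: per_p; lia.
by rewrite zp_eq same; congr nth; lia.
Qed.

Lemma periodic_on_extend_left w a b p : periodic_on w a b p -> a + p <= b.+1 ->
  exists2 a', a' <= a & periodic_on w a' b p /\
    (a' = 0 \/ nth false w a'.-1 != nth false w (a'.-1 + p)).
Proof.
elim: a => [| a IH] per_p long; first by exists 0 => //; split; [| left].
case: (eqVneq (nth false w a) (nth false w (a + p))) => [same | differ]; last first.
  by exists a.+1 => //; split; [| right].
have [|| a' a'_le per_left] := IH; try lia; last by exists a' => //; lia.
by move=> z ? ?; case: (eqVneq z a) => [-> | ?] //; apply: per_p; lia.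
Qed.

Lemma run_at_catl_extend u v a b p : run_at u a b p ->
  exists2 b', b <= b' < size (u ++ v) & run_at (u ++ v) a b' p.
Proof.
case=> p_gt0 long in_u per_p least_p left_max right_max.
have per_uv : periodic_on (u ++ v) a b p by apply/periodic_on_catl.
have [||b' b'_range [per_b' right']] := periodic_on_extend_right per_uv;
  try (rewrite ?size_cat; lia).
exists b' => //; constructor=> //; try lia.
- move=> q q_lt per_q; apply: (least_p q q_lt); apply/(@periodic_on_catl u v) => //.
  by apply: periodic_on_sub per_q _ _; lia.
- by case: left_max => [-> | ]; [left | right; rewrite !nth_catl //; lia].
Qed.

Lemma run_at_catr_extend u v a b p : run_at v a b p ->
  exists2 a', a' <= size u + a & run_at (u ++ v) a' (size u + b) p.
Proof.
case=> p_gt0 long in_v per_p least_p left_max right_max.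
have per_uv : periodic_on (u ++ v) (size u + a) (size u + b) p by apply/periodic_on_catr.
have [|a' a'_le [per_a' left']] := periodic_on_extend_left per_uv; first lia.
exists a' => //; constructor=> //; try lia.
- by rewrite size_cat; lia.
- move=> q q_lt per_q; apply: (least_p q q_lt); apply/(@periodic_on_catr u).
  exact: periodic_on_sub per_q _ _.
- case: right_max => [ | ]; [left; rewrite size_cat; lia | right].
  have -> : (size u + b).+1 - p = size u + (b.+1 - p) by lia.
  by rewrite -addnS !nth_catr.
Qed.

Section RelationCounting.
Variables (T2 : finType) (B : {pred T2}).

Lemma rel_image (T1 : finType) (A : {pred T1}) (R : T1 -> T2 -> Prop) :
  (forall x, x \in A -> exists2 y, y \in B & R x y) ->
  (forall x x' y, x \in A -> x' \in A -> R x y -> R x' y -> x = x') ->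
  exists2 C : {set T2}, #|C| = #|A| & forall y, y \in C -> y \in B /\ exists2 x, x \in A & R x y.
Proof.
move=> R_total R_inj; case: (pickP (mem A)) => [x0 x0A | A0]; last first.
  by exists set0 => [| y]; rewrite ?cards0 ?inE // eq_card0.
have [y0 _ _] := R_total x0 x0A.
pose f x := epsilon (inhabits y0) (fun y => y \in B /\ R x y).
have f_spec x : x \in A -> f x \in B /\ R x (f x).
  move=> xA; have [y yB Rxy] := R_total x xA.
  by apply: (epsilon_spec (inhabits y0) (fun y => y \in B /\ R x y)); exists y.
exists (f @: A).
  apply: card_in_imset => x x' xA x'A fx_eq; apply: (R_inj x x' (f x)) => //.
  - exact: (f_spec x xA).2.
  - by rewrite fx_eq; exact: (f_spec x' x'A).2.
move=> _ /imsetP [x xA ->]; have [fxB fxR] := f_spec x xA; split=> //; by exists x.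
Qed.

Lemma leq_card_rel (T1 : finType) (A : {pred T1}) (R : T1 -> T2 -> Prop) :
  (forall x, x \in A -> exists2 y, y \in B & R x y) ->
  (forall x x' y, x \in A -> x' \in A -> R x y -> R x' y -> x = x') ->
  #|A| <= #|B|.
Proof.
move=> R_total R_inj; have [C <- C_sub] := rel_image R_total R_inj.
by apply/subset_leq_card/subsetP => y /C_sub [].
Qed.

Lemma leq_card_rel2 (T1 T1' : finType) (A : {pred T1}) (A' : {pred T1'})
    (R : T1 -> T2 -> Prop) (R' : T1' -> T2 -> Prop) :
  (forall x, x \in A -> exists2 y, y \in B & R x y) ->
  (forall x x' y, x \in A -> x' \in A -> R x y -> R x' y -> x = x') ->
  (forall x, x \in A' -> exists2 y, y \in B & R' x y) ->
  (forall x x' y, x \in A' -> x' \in A' -> R' x y -> R' x' y -> x = x') ->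
  (forall x x' y, x \in A -> x' \in A' -> R x y -> R' x' y -> False) ->
  #|A| + #|A'| <= #|B|.
Proof.
move=> R_total R_inj R'_total R'_inj disjoint.
have [C <- C_sub] := rel_image R_total R_inj.
have [C' <- C'_sub] := rel_image R'_total R'_inj.
have CC'0 : C :&: C' = set0.
  apply/setP=> y; rewrite !inE; apply/negP=> /andP [/C_sub [_ [x xA Rxy]] /C'_sub [_ [x' x'A R'x'y]]].
  exact: (disjoint x x' y xA x'A Rxy R'x'y).
rewrite -cardsUI CC'0 cards0 addn0.
by apply/subset_leq_card/subsetP => y; rewrite inE => /orP [/C_sub [] | /C'_sub []].
Qed.

End RelationCounting.

Local Notation endpoints w := ('I_(size w).+1 * 'I_(size w).+1)%type.

Definition run_set (w : seq bool) : {pred endpoints w} :=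
  [pred x : endpoints w | is_run w x.1 x.2].

Definition nonfinal_runs (w : seq bool) : {pred endpoints w} :=
  [pred x : endpoints w | is_run w x.1 x.2 && (x.2 < size w)].

Arguments run_set : clear implicits.
Arguments nonfinal_runs : clear implicits.

Lemma nruns_card w : nruns w = #|run_set w|.
Proof.
rewrite /nruns pair_big /= -(sum1_card (run_set w)) [RHS]big_mkcond /=.
by apply: eq_bigr => x _; rewrite inE; case: is_run.
Qed.

Lemma card_nonfinal_runs w : #|nonfinal_runs w| <= #|run_set w|.
Proof. by apply/subset_leq_card/subsetP => x; rewrite !inE => /andP []. Qed.

Lemma ord_pair_eq n (x y : 'I_n * 'I_n) : x.1 = y.1 :> nat -> x.2 = y.2 :> nat -> x = y.
Proof. by case: x y => [x1 x2] [y1 y2] /= /val_inj -> /val_inj ->. Qed.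

Lemma run_at_run_set w a b p : run_at w a b p ->
  exists2 y : endpoints w, is_run w y.1 y.2 & y.1 = a.+1 :> nat /\ y.2 = b.+1 :> nat.
Proof.
move=> run_ab; have [p_gt0 long in_w _ _ _ _] := run_ab.
have a_lt : a.+1 < (size w).+1 by lia.
have b_lt : b.+1 < (size w).+1 by lia.
by exists (Ordinal a_lt, Ordinal b_lt) => //; apply/is_runP; split=> //; exists p.
Qed.

Lemma card_nonfinal_runs_cat u v :
  #|nonfinal_runs u| + #|nonfinal_runs v| <= #|nonfinal_runs (u ++ v)|.
Proof.
apply: (leq_card_rel2 (A := nonfinal_runs u) (A' := nonfinal_runs v) (B := nonfinal_runs (u ++ v))
  (R := fun (x : endpoints u) (y : endpoints (u ++ v)) => y.1 = x.1 :> nat /\ y.2 = x.2 :> nat)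
  (R' := fun (x : endpoints v) (y : endpoints (u ++ v)) => y.2 = size u + x.2 :> nat /\
           if x.1 == 1 :> nat then (y.1 <= size u + 1 : Prop) else y.1 = size u + x.1 :> nat)).
- move=> [x1 x2]; rewrite inE /= => /andP [/is_runP [x1_gt0 [p run_x]] x2_lt].
  have [p_gt0 long _ _ _ _ _] := run_x.
  have [y y_run [y1 y2]] := run_at_run_set (run_at_catl v run_x ltac:(lia)).
  by exists y; [rewrite inE y_run /= y2 size_cat | ]; lia.
- by move=> x x' y _ _ [? ?] [? ?]; apply: ord_pair_eq; lia.
- move=> [x1 x2]; rewrite inE /= => /andP [/is_runP [x1_gt0 [p run_x]] x2_lt].
  have [p_gt0 long _ _ _ _ _] := run_x.
  case: eqP => [x1_eq1 | x1_ne1].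
  + have [a' a'_le run_uv] := run_at_catr_extend u run_x.
    have [y y_run [y1 y2]] := run_at_run_set run_uv.
    by exists y; [rewrite inE y_run /= y2 size_cat | ]; lia.
  + have [y y_run [y1 y2]] := run_at_run_set (run_at_catr u run_x ltac:(lia)).
    by exists y; [rewrite inE y_run /= y2 size_cat | ]; lia.
- move=> x x' y; rewrite !inE => /andP [/is_runP [? _] _] /andP [/is_runP [? _] _].
  move=> [y2 y1] [y2' y1']; apply: ord_pair_eq; last lia.
  by move: y1 y1'; do 2!(case: eqP => ?); lia.
- by move=> x x' y; rewrite !inE => /andP [_ ?] _ [? ?] [? _]; lia.
Qed.

Definition periodic_extension (w : seq bool) (p c : nat) : seq bool :=
  mkseq (fun t => nth false w (size w - p + t %% p)) c.

Lemma periodic_on_cat_extension w x a p :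
  periodic_on (w ++ x) a (size (w ++ x)).-1 p -> 0 < p -> a + p <= size w ->
  x = periodic_extension w p (size x).
Proof.
move=> per_p p_gt0 ap_le; apply: (@eq_from_nth _ false); first by rewrite size_mkseq.
move=> t; elim/ltn_ind: t => t IH t_lt; rewrite nth_mkseq //.
have -> : nth false x t = nth false (w ++ x) (size w + t - p).
  rewrite -(nth_catr w) (per_p (size w + t - p)) ?size_cat; try lia.
  by congr nth; lia.
case: (ltnP t p) => [t_lt_p | t_ge_p].
- by rewrite nth_catl ?modn_small //; [congr nth | ]; lia.
- have -> : size w + t - p = size w + (t - p) by lia.
  rewrite nth_catr IH ?nth_mkseq; try lia.
  by rewrite -[(t - p) %% p](modnDr _ p) subnK.
Qed.

Lemma card_run_set_le_nonfinal_cat w x :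
  (forall p, 0 < p <= size w -> x != periodic_extension w p (size x)) ->
  #|run_set w| <= #|nonfinal_runs (w ++ x)|.
Proof.
move=> x_aperiodic.
apply: (leq_card_rel (A := run_set w) (B := nonfinal_runs (w ++ x)) (R := fun (z : endpoints w) (y : endpoints (w ++ x)) => y.1 = z.1 :> nat /\
  if z.2 == size w :> nat then (size w <= y.2 : Prop) else y.2 = z.2 :> nat)).
- move=> [z1 z2]; rewrite inE /= => /is_runP [z1_gt0 [p run_z]].
  have [p_gt0 long in_w _ _ _ _] := run_z.
  case: eqP => [z2_last | z2_nlast].
  + have [b' b'_range run_b'] := run_at_catl_extend x run_z.
    have [y y_run [y1 y2]] := run_at_run_set run_b'.
    exists y; last lia.
    rewrite inE y_run /= y2; apply: contraT; rewrite -leqNgt => b'_last.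
    have per_end : periodic_on (w ++ x) z1.-1 (size (w ++ x)).-1 p.
      by have := run_periodic run_b'; have -> : b' = (size (w ++ x)).-1 by lia.
    have x_ext := periodic_on_cat_extension per_end p_gt0 ltac:(lia).
    by have := x_aperiodic p ltac:(lia); rewrite -x_ext eqxx.
  + have [y y_run [y1 y2]] := run_at_run_set (run_at_catl x run_z ltac:(lia)).
    by exists y; [rewrite inE y_run /= y2 size_cat | ]; lia.
- move=> z z' y; rewrite !inE => /is_runP [_ [p run_z]] /is_runP [_ [p' run_z']].
  have := run_in_word run_z; have := run_in_word run_z'.
  move=> ? ? [y1 y2] [y1' y2']; apply: ord_pair_eq; first lia.
  by move: y2 y2'; do 2!(case: eqP => ?); lia.
Qed.

Lemma exists_aperiodic_word w c : size w < 2 ^ c ->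
  exists2 x : seq bool, size x = c &
    forall p, 0 < p <= size w -> x != periodic_extension w p (size x).
Proof.
move=> w_small; pose E := [seq periodic_extension w p.+1 c | p <- iota 0 (size w)].
have [x x_notE] : exists x : c.-tuple bool, tval x \notin E.
  apply/existsP; rewrite -negb_forall; apply/negP => /forallP all_E.
  have words_in_E : {subset map val (enum {: c.-tuple bool}) <= E}.
    by move=> _ /mapP [t _ ->]; exact: all_E.
  have uniq_words : uniq (map val (enum {: c.-tuple bool})).
    by rewrite map_inj_uniq ?enum_uniq //; exact: val_inj.
  have := uniq_leq_size uniq_words words_in_E.
  by rewrite size_map -cardE card_tuple card_bool size_map size_iota; lia.
exists x; first exact: size_tuple.
move=> p p_range; apply: contra x_notE; rewrite size_tuple => /eqP ->.
by apply/mapP; exists p.-1; rewrite ?mem_iota; [ | congr periodic_extension]; lia.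
Qed.

Fixpoint lex_lt (c : bool) (s t : seq bool) : bool :=
  match s, t with
  | [::], [::] => false
  | [::], _ :: _ => true
  | _ :: _, [::] => false
  | x :: s', y :: t' => if x == y then lex_lt c s' t' else x == c
  end.

Lemma lex_lt_asym c s t : lex_lt c s t -> lex_lt c t s = false.
Proof.
elim: s t => [| x s IH] [| y t] //=; case: eqP => [-> | x_ne_y]; first by rewrite eqxx; apply: IH.
by case: x y x_ne_y {IH} => [] [] //; case: c.
Qed.

Lemma lex_lt_at c s t L : (forall x, x < L -> nth false s x = nth false t x) ->
  L < size t -> L <= size s ->
  L = size s \/ nth false s L = c /\ nth false t L != c -> lex_lt c s t.
Proof.
elim: L s t => [| L IH] [| x s] [| y t] //= same t_long s_long.
- by case=> [// | [-> y_ne]]; rewrite eq_sym (negbTE y_ne) eqxx.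
- have /= -> := same 0 isT; rewrite eqxx => differ; apply: IH => //; last by case: differ => [[] | ]; [left | right].
  by move=> z z_lt; apply: (same z.+1).
Qed.

Section LyndonRotation.
Variables (c : bool) (u : nat -> bool) (p : nat).
Hypothesis p_gt0 : 0 < p.
Hypothesis u_periodic : forall t, u (t + p) = u t.
Hypothesis u_primitive : forall d, 0 < d < p -> ~ (forall t, u (t + d) = u t).

Definition lex_lt_before (f g : nat -> bool) L := exists e, [/\ e < L,
  forall e', e' < e -> f e' = g e', f e = c & g e != c].

Lemma lex_lt_before_irr f L : ~ lex_lt_before f f L.
Proof. by case=> e [_ _ ->]; rewrite eqxx. Qed.

Lemma lex_lt_before_trans f g h L :
  lex_lt_before f g L -> lex_lt_before g h L -> lex_lt_before f h L.
Proof.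
case=> [e1 [e1_lt fg fe1 ge1]] [e2 [e2_lt gh ge2 he2]].
case: (ltngtP e1 e2) => [e12 | e21 | e_eq].
- exists e1; split=> // [e' ? | ]; last by rewrite -gh.
  by rewrite fg ?gh //; lia.
- exists e2; split=> // [e' ? | ]; last by rewrite fg.
  by rewrite fg ?gh //; lia.
- by move: ge1; rewrite e_eq ge2 eqxx.
Qed.

Lemma lex_lt_before_total f g L :
  (forall e, e < L -> f e = g e) \/ lex_lt_before f g L \/ lex_lt_before g f L.
Proof.
elim: L => [| L [same | [[e [e_lt fg fe ge]] | [e [e_lt gf ge fe]]]]]; first by left.
- case: (eqVneq (f L) (g L)) => [same_L | differ].
    by left=> e e_lt; case: (ltnP e L) => [? | ?]; [apply: same | have -> : e = L by lia].
  right; case: (eqVneq (f L) c) => fL.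
  + by left; exists L; split=> //; rewrite -fL eq_sym.
  + right; exists L; split=> // [e' ? | ]; first by rewrite same.
    by case: (f L) (g L) c differ fL => [] [] [].
- by right; left; exists e; split=> //; lia.
- by right; right; exists e; split=> //; lia.
Qed.

Lemma eq_lex_lt_before f f' g g' L : f =1 f' -> g =1 g' ->
  lex_lt_before f g L -> lex_lt_before f' g' L.
Proof.
move=> ff' gg' [e [e_lt fg fe ge]]; exists e.
by split; rewrite // -?ff' -?gg' // => e' ?; rewrite -ff' -gg' fg.
Qed.

Lemma u_periodic_mul t m : u (t + m * p) = u t.
Proof. by elim: m => [| m IH]; rewrite ?addn0 // mulSn addnA addnAC u_periodic. Qed.

Let shift s t := u (s + t).

Lemma shift_mod s : shift s =1 shift (s %% p).
Proof. by move=> t; rewrite /shift {1}(divn_eq s p) -addnA addnC u_periodic_mul. Qed.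

Lemma exists_min_shift_upto n : 0 < n <= p -> exists2 k, 0 < k <= n &
  forall s, 0 < s <= n -> ~ lex_lt_before (shift s) (shift k) p.
Proof.
elim: n => [// | n IH] n_range; case: (posnP n) => [-> | n_gt0].
  exists 1 => [// | s ?]; have -> : s = 1 by lia.
  exact: lex_lt_before_irr.
have [| k k_range k_min] := IH; first lia.
case: (lex_lt_before_total (shift n.+1) (shift k) p) => [same | [lt_n | gt_n]].
- exists k => [| s ?]; first lia.
  case: (eqVneq s n.+1) => [-> [e [? _ ne kn]] | ?]; last by apply: k_min; lia.
  by move: kn; rewrite -same // ne eqxx.
- exists n.+1 => [| s ?]; first lia.
  case: (eqVneq s n.+1) => [-> | ?]; first exact: lex_lt_before_irr.
  by move=> lt_s; apply: (k_min s); [lia | exact: lex_lt_before_trans lt_s lt_n].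
- exists k => [| s ?]; first lia.
  case: (eqVneq s n.+1) => [-> lt_n | ?]; last by apply: k_min; lia.
  by apply: (k_min k); [lia | exact: lex_lt_before_trans gt_n lt_n].
Qed.

Lemma exists_min_shift : exists2 k, 0 < k <= p & forall s, ~ lex_lt_before (shift s) (shift k) p.
Proof.
have [| k k_range k_min] := @exists_min_shift_upto p; first lia.
exists k => // s lt_s; pose s' := if s %% p == 0 then p else s %% p.
apply: (k_min s').
  by rewrite /s'; case: eqP => ?; [lia | have := ltn_pmod s p_gt0; lia].
apply: eq_lex_lt_before lt_s => // t; rewrite shift_mod /s'.
by case: eqP => // ->; rewrite /shift add0n addnC u_periodic.
Qed.

Lemma shifts_differ k d : 0 < d < p -> ~ (forall t, t < p -> u (k + d + t) = u (k + t)).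
Proof.
move=> d_range agree_p.
have agree t : u (k + d + t) = u (k + t).
  elim/ltn_ind: t => t IH; case: (ltnP t p) => [| t_ge]; first exact: agree_p.
  have -> : k + d + t = k + d + (t - p) + p by lia.
  have -> : k + t = k + (t - p) + p by lia.
  by rewrite !u_periodic IH //; lia.
apply: (u_primitive d_range) => t.
rewrite -(u_periodic_mul (t + d) k) -[in RHS](u_periodic_mul t k).
have k_le := leq_pmulr k p_gt0; have := agree (t + k * p - k).
have -> : k + d + (t + k * p - k) = t + d + k * p by lia.
by have -> : k + (t + k * p - k) = t + k * p by lia.
Qed.

(* A Lyndon word is smaller than its proper suffixes, already within its length. *)
Lemma min_shift_lt_before k : (forall s, ~ lex_lt_before (shift s) (shift k) p) ->
  forall m, k < m < k + p -> lex_lt_before (shift k) (shift m) (k + p - m).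
Proof.
move=> k_min m m_range.
case: (lex_lt_before_total (shift k) (shift m) p) => [same | [[e [e_lt km ke me]] | gt]].
- exfalso; apply: (shifts_differ (k := k) (d := m - k)) => [| t t_lt]; first lia.
  have -> : k + (m - k) = m by lia.
  exact: (esym (same t t_lt)).
- case: (ltnP e (k + p - m)) => e_range; first by exists e; split.
  exfalso; apply: (k_min (k + (k + p - m))); exists (e - (k + p - m)); split; first lia.
  + move=> e' e'_lt; rewrite /shift.
    have -> : k + (k + p - m) + e' = k + (k + p - m + e') by lia.
    rewrite [LHS](km (k + p - m + e')) /shift; last lia.
    have -> : m + (k + p - m + e') = k + e' + p by lia.
    by rewrite u_periodic.
  + by rewrite /shift; have -> : k + (k + p - m) + (e - (k + p - m)) = k + e by lia.
  + rewrite /shift -u_periodic.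
    by have -> : k + (e - (k + p - m)) + p = m + e by lia.
- by exfalso; apply: (k_min m).
Qed.

End LyndonRotation.

Lemma periodic_on_mod w a b p t : periodic_on w a b p -> 0 < p -> a + t <= b ->
  nth false w (a + t) = nth false w (a + t %% p).
Proof.
move=> per_p p_gt0; elim/ltn_ind: t => t IH t_le.
case: (ltnP t p) => [t_lt | t_ge]; first by rewrite modn_small.
have -> : a + t = a + (t - p) + p by lia.
rewrite -(per_p (a + (t - p))) ; try lia.
rewrite IH; try lia.
by rewrite -[(t - p) %% p](modnDr _ p) subnK.
Qed.

Lemma run_at_drop_lt w a b p m : run_at w a b p -> a <= m -> m + p <= b.+1 ->
  lex_lt (nth false w b.+1) (drop (m + p) w) (drop m w).
Proof.
case=> p_gt0 long in_w per_p _ _ right_max m_ge m_le.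
apply: (@lex_lt_at _ _ _ (b.+1 - m - p)); rewrite ?size_drop; try lia.
- move=> x x_lt; rewrite !nth_drop; have -> : m + p + x = m + x + p by lia.
  by rewrite (per_p (m + x)) //; lia.
- case: (ltnP b.+1 (size w)) => [b_lt | b_last]; last by left; lia.
  right; rewrite !nth_drop; split; first by congr nth; lia.
  case: right_max => [ | ]; first lia.
  have -> : m + (b.+1 - m - p) = b.+1 - p by lia.
  by rewrite eq_sym.
Qed.

Lemma run_at_lyndon_root w a b p : run_at w a b p -> exists K, [/\ a < K, K + p <= b.+1 &
  forall d, 0 < d < p -> lex_lt (nth false w b.+1) (drop (K + d) w) (drop K w) = false].
Proof.
move=> run_ab; have [p_gt0 long in_w per_p least_p _ _] := run_ab.
set c := nth false w b.+1; pose u t := nth false w (a + t %% p).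
have u_run t : a + t <= b -> nth false w (a + t) = u t.
  by move=> ?; rewrite /u -(periodic_on_mod per_p p_gt0).
have u_periodic t : u (t + p) = u t by rewrite /u modnDr.
have u_primitive d : 0 < d < p -> ~ (forall t, u (t + d) = u t).
  move=> d_range u_per; apply: (least_p d d_range) => z ? ?.
  have -> : z = a + (z - a) by lia.
  by rewrite -addnA !u_run ?u_per //; lia.
have [k k_range k_min] := exists_min_shift c p_gt0 u_periodic.
exists (a + k); split; try lia.
move=> d d_range; apply: lex_lt_asym.
have [| e [e_lt agree ue ue']] :=
  min_shift_lt_before p_gt0 u_periodic u_primitive k_min (m := k + d); first lia.
apply: (@lex_lt_at _ _ _ e); rewrite ?size_drop; try lia.
- move=> x x_lt; rewrite !nth_drop -!addnA !u_run; try lia.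
  by rewrite addnA agree.
- by right; rewrite !nth_drop -!addnA !u_run ?addnA; try lia.
Qed.

Lemma run_at_unique w a b a' b' p K : run_at w a b p -> run_at w a' b' p ->
  a < K -> a' < K -> K + p <= b.+1 -> K + p <= b'.+1 -> a = a' /\ b = b'.
Proof.
case=> p_gt0 _ in_w per_p _ left_max right_max [_ _ in_w' per_p' _ left_max' right_max'] *.
split.
- case: (ltngtP a a') => // a_lt; exfalso.
  + case: left_max' => [ | /eqP]; [lia | apply; apply: per_p; lia].
  + case: left_max => [ | /eqP]; [lia | apply; apply: per_p'; lia].
- case: (ltngtP b b') => // b_lt; exfalso.
  + case: right_max => [ | /eqP]; [lia | apply].
    have b_eq : b.+1 - p + p = b.+1 by lia.
    by rewrite -{1}b_eq -(per_p' (b.+1 - p)); lia.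
  + case: right_max' => [ | /eqP]; [lia | apply].
    have b_eq : b'.+1 - p + p = b'.+1 by lia.
    by rewrite -{1}b_eq -(per_p (b'.+1 - p)); lia.
Qed.

(* A run is sent to the letter following it and the start K of its Lyndon root: its
   period is the least d for which drop (K + d) w is the smaller suffix. *)
Lemma card_run_set_le w : #|run_set w| <= 2 * (size w).+1.
Proof.
have -> : 2 * (size w).+1 = #|{: bool * 'I_(size w).+1}| by rewrite card_prod card_bool card_ord.
apply: (leq_card_rel (B := predT) (R := fun (x : endpoints w) (y : bool * 'I_(size w).+1) =>
  exists p, [/\ run_at w x.1.-1 x.2.-1 p, x.1.-1 < y.2, y.2 + p <= x.2.-1.+1,
    lex_lt y.1 (drop (y.2 + p) w) (drop y.2 w) &
    forall d, 0 < d < p -> lex_lt y.1 (drop (y.2 + d) w) (drop y.2 w) = false])).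
- move=> x; rewrite inE => /is_runP [_ [p run_x]].
  have [K [K_gt K_le K_root]] := run_at_lyndon_root run_x.
  have K_lt : K < (size w).+1 by have := run_in_word run_x; lia.
  exists (nth false w x.2.-1.+1, Ordinal K_lt) => //; exists p; split=> //=.
  by apply: run_at_drop_lt run_x _ _; lia.
- move=> [x1 x2] [x1' x2'] [c K]; rewrite !inE /= => /is_runP [? _] /is_runP [? _].
  move=> [p [run_x K_gt K_le lt_p first_p]] [p' [run_x' K_gt' K_le' lt_p' first_p']].
  have p_eq : p = p'.
    have := run_period_gt0 run_x; have := run_period_gt0 run_x'.
    case: (ltngtP p p') => // p_lt ? ?.
    + by move: lt_p; rewrite first_p' //; lia.
    + by move: lt_p'; rewrite first_p //; lia.
  subst p'; have [a_eq b_eq] := run_at_unique run_x run_x' K_gt K_gt' K_le K_le'.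
  by have p_gt0 := run_period_gt0 run_x; apply: ord_pair_eq => /=; lia.
Qed.

Definition rho_nonfinal (n : nat) : nat := \max_(w : n.-tuple bool) #|nonfinal_runs w|.

Lemma card_nonfinal_runs_le_rho n w : size w = n -> #|nonfinal_runs w| <= rho_nonfinal n.
Proof. by move=> <-; exact: (@leq_bigmax _ (fun t : _.-tuple bool => #|nonfinal_runs t|) (in_tuple w)). Qed.

Lemma exists_max_nonfinal_runs n : exists2 w : seq bool, size w = n & #|nonfinal_runs w| = rho_nonfinal n.
Proof.
rewrite /rho_nonfinal; have [|w ->] := eq_bigmax (fun t : n.-tuple bool => #|nonfinal_runs t|).
  by rewrite card_tuple card_bool expn_gt0.
by exists w; rewrite ?size_tuple.
Qed.

Lemma rho_nonfinal_superadditive m n : rho_nonfinal m + rho_nonfinal n <= rho_nonfinal (m + n).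
Proof.
have [u <- <-] := exists_max_nonfinal_runs m; have [v <- <-] := exists_max_nonfinal_runs n.
exact: leq_trans (card_nonfinal_runs_cat u v) (card_nonfinal_runs_le_rho (size_cat u v)).
Qed.

Lemma rho_nonfinal_le_rho n : rho_nonfinal n <= rho n.
Proof.
apply/bigmax_leqP => w _; apply: leq_trans (card_nonfinal_runs w) _.
by rewrite -nruns_card; exact: (@leq_bigmax _ (fun t : n.-tuple bool => nruns t) w).
Qed.

Lemma rho_le_rho_nonfinal n c : n < 2 ^ c -> rho n <= rho_nonfinal (n + c).
Proof.
move=> n_small; apply/bigmax_leqP => w _; rewrite nruns_card.
have [x x_size x_aperiodic] := @exists_aperiodic_word w c ltac:(by rewrite size_tuple).
apply: leq_trans (card_run_set_le_nonfinal_cat x_aperiodic) _.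
by apply: card_nonfinal_runs_le_rho; rewrite size_cat size_tuple x_size.
Qed.

Lemma rho_le n : rho n <= 2 * n.+1.
Proof.
apply/bigmax_leqP => w _; rewrite nruns_card.
by apply: leq_trans (card_run_set_le w) _; rewrite size_tuple.
Qed.

Lemma rho_nonfinal_linear n : rho_nonfinal n <= 4 * n.
Proof.
case: n => [| n]; last by apply: leq_trans (rho_nonfinal_le_rho _) _; apply: leq_trans (rho_le _) _; lia.
by have := rho_nonfinal_superadditive 0 0; rewrite addn0; lia.
Qed.

Section Superadditive.
Variable a : nat -> nat.
Hypothesis a_super : forall m n, a m + a n <= a (m + n).

Lemma superadditive_mul q m : q * a m <= a (q * m).
Proof.
elim: q => [| q IH]; first by rewrite !mul0n.
by rewrite !mulSn; apply: leq_trans (a_super _ _); rewrite leq_add2l.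
Qed.

Lemma superadditive_lower n m : 0 < m -> (n - m) * a m <= a n * m.
Proof.
move=> m_gt0.
have quot_le : n %/ m * a m <= a n.
  rewrite {2}(divn_eq n m); apply: leq_trans (superadditive_mul _ _) _.
  exact: leq_trans (leq_addr _ _) (a_super _ _).
have n_m_le : n - m <= n %/ m * m.
  by have := divn_eq n m; have := ltn_pmod n m_gt0; move: (n %/ m * m) (n %% m) => q r; lia.
apply: leq_trans (_ : n %/ m * m * a m <= _); first by rewrite leq_mul2r n_m_le orbT.
by rewrite mulnAC leq_mul2r quot_le orbT.
Qed.

End Superadditive.

Lemma linear_le_exp2 K t : 2 * K + 1 <= t -> K * t.+1 <= 2 ^ t.
Proof.
elim: t => [| t IH] t_ge; first lia.
case: (eqVneq t (2 * K)) => [-> | t_ne]; last by have := IH ltac:(lia); rewrite expnS; lia.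
have := ltn_expl K (isT : 1 < 2).
have -> : 2 ^ (2 * K).+1 = 2 * (2 ^ K * 2 ^ K) by rewrite expnS -expnD addnn -mul2n.
by move: (2 ^ K) => x; nia.
Qed.

Lemma trunc_log_linear K n : 2 ^ (2 * K + 1) <= n -> K * (trunc_log 2 n).+1 <= n.
Proof.
move=> n_ge; have n_gt0 : 0 < n by apply: leq_trans n_ge; rewrite expn_gt0.
apply: leq_trans (linear_le_exp2 _) (trunc_logP (isT : 1 < 2) n_gt0).
have : 2 ^ (2 * K + 1) < 2 ^ (trunc_log 2 n).+1 by apply: leq_ltn_trans n_ge (trunc_log_ltn _ _).
by rewrite ltn_exp2l.
Qed.

Open Scope R_scope.

Lemma INR_le_nat m n : (m <= n)%N -> INR m <= INR n.
Proof. by move/leP; apply: le_INR. Qed.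

Lemma INR_succ_gt0 n : 0 < INR n.+1.
Proof. exact/lt_0_INR/Nat.lt_0_succ. Qed.

Section Fekete.
Variables (a : nat -> nat) (C : nat).
Hypothesis a_super : forall m n, (a m + a n <= a (m + n))%N.
Hypothesis a_linear : forall n, (a n <= C * n)%N.

Let ratio n := INR (a n.+1) / INR n.+1.

Lemma ratio_le_bound n : ratio n <= INR C.
Proof. by apply/Rle_div_l; [exact: INR_succ_gt0 | rewrite -mult_INR; exact/INR_le_nat/a_linear]. Qed.

Lemma exists_ratio_sup : exists L, (forall n, ratio n <= L) /\
  forall eps, 0 < eps -> exists m, L - eps < ratio m.
Proof.
pose E x := exists n, x = ratio n.
have [|| L [L_ub L_least]] := completeness E.
- by exists (INR C) => _ [n ->]; exact: ratio_le_bound.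
- by exists (ratio 0); exists 0%N.
exists L; split=> [n | eps eps_gt0]; first by apply: L_ub; exists n.
apply: NNPP => far; suff : L <= L - eps by lra.
by apply: L_least => _ [n ->]; apply: Rnot_lt_le => close; apply: far; exists n.
Qed.

Lemma fekete : exists L, (forall n, INR (a n) <= L * INR n) /\ is_lim_seq ratio L.
Proof.
have [L [L_ub L_sup]] := exists_ratio_sup; exists L; split.
  case=> [| n]; last by apply/Rle_div_l; [exact: INR_succ_gt0 | exact: L_ub].
  by have := a_linear 0%N; rewrite muln0 leqn0 => /eqP ->; rewrite Rmult_0_r; right.
apply/is_lim_seq_Reals => eps eps_gt0.
have [m m_close] := L_sup (eps / 2) ltac:(lra).
have [N N_large] := INR_archimed (eps / 2) (INR C * INR m.+1) ltac:(lra).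
exists (N + m)%N => n /leP n_ge; rewrite /R_dist Rabs_left1; last by have := L_ub n; lra.
have X_ge : INR N <= INR n.+1 by apply: INR_le_nat; lia.
have := INR_le_nat (superadditive_lower a_super n.+1 (ltn0Sn m)).
rewrite !mult_INR minus_INR; last by apply/leP; lia.
move: m_close N_large X_ge (ratio_le_bound m) (INR_succ_gt0 n) (INR_succ_gt0 m); rewrite /ratio.
set X := INR n.+1; set Y := INR m.+1; set A := INR (a m.+1); set B := INR (a n.+1).
set r := A / Y => r_close N_large X_ge r_le X_gt0 Y_gt0 lower.
have r_lower : (X - Y) * r <= B.
  apply: (Rmult_le_reg_r Y) => //; rewrite Rmult_assoc.
  by have -> : r * Y = A by rewrite /r; field; lra.
have r_small : Y * r < eps / 2 * X.
  have : Y * r <= Y * INR C by apply: Rmult_le_compat_l; lra.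
  have : INR N * (eps / 2) <= X * (eps / 2) by apply: Rmult_le_compat_r; lra.
  lra.
suff : (L - eps) * X < B by move/Rlt_div_r => /(_ X_gt0); lra.
have : (L - eps) * X < (r - eps / 2) * X by apply: Rmult_lt_compat_r; lra.
lra.
Qed.

End Fekete.

Lemma log_ratio_lim0 : is_lim_seq (fun n => INR (trunc_log 2 n.+1).+1 / INR n.+1) 0.
Proof.
apply/is_lim_seq_Reals => eps eps_gt0.
have [K [K_inv K_gt0]] := archimed_cor1 eps eps_gt0.
exists (2 ^ (2 * K + 1))%N => n /leP n_ge; rewrite /R_dist Rminus_0_r Rabs_pos_eq; last first.
  by apply: Rdiv_le_0_compat; [exact: pos_INR | exact: INR_succ_gt0].
have K_pos : 0 < INR K by exact: lt_0_INR.
have bound : INR K * INR (trunc_log 2 n.+1).+1 <= INR n.+1.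
  by rewrite -mult_INR; apply/INR_le_nat/trunc_log_linear; lia.
apply/Rlt_div_l; first exact: INR_succ_gt0.
apply: (Rle_lt_trans _ (INR n.+1 / INR K)); first by apply/Rle_div_r => //; rewrite Rmult_comm.
by rewrite /Rdiv Rmult_comm; apply: Rmult_lt_compat_r => //; exact: INR_succ_gt0.
Qed.

Theorem mainTheorem2 :
  exists l : R, Un_cv (fun n : nat => INR (rho (S n)) / INR (S n)) l.
Proof.
have [L [L_bound L_lim]] := fekete rho_nonfinal_superadditive rho_nonfinal_linear.
exists L; apply/is_lim_seq_Reals.
apply: (is_lim_seq_le_le _ _
  (fun n => L * (1 + INR (trunc_log 2 n.+1).+1 / INR n.+1)) _ _ L_lim).
  move=> n; have n_gt0 := INR_succ_gt0 n; split.
    by apply: Rmult_le_compat_r; [exact/Rlt_le/Rinv_0_lt_compat | exact/INR_le_nat/rho_nonfinal_le_rho].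
  apply/Rle_div_l => //.
  apply: Rle_trans (INR_le_nat (rho_le_rho_nonfinal (trunc_log_ltn _ (isT : (1 < 2)%N)))) _.
  by apply: Rle_trans (L_bound _) _; rewrite plus_INR; right; field; lra.
have := is_lim_seq_scal_l _ L _ (is_lim_seq_plus' _ _ 1 0 (is_lim_seq_const 1) log_ratio_lim0).
by rewrite Rplus_0_r /= Rmult_1_r.
Qed.
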